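(* Let $\mathcal F$ be a finite set of fragments, $\{u,v\}\in D$ with $u<v$, and let $E_u=\{ES_F:F\in\mathcal F_{\to u}\}$, $L_u=\{LS_F:F\in\mathcal F_{u\to}\}$, $E_v=\{ES_F:F\in\mathcal F_{\to v}\}$, $L_v=\{LS_F:F\in\mathcal F_{v\to}\}$. Consider, for $t\in\mathbb R$, the inequalities in variables $x\in\mathbb R^{\mathcal F}$ and $p\in\mathbb R$: (a$_t$) $\sum_{F\in\mathcal F_{\to u}:ES_F\ge t}x_F+\sum_{F\in\mathcal F_{v\to}:LS_F<t+\delta^{\min}_{uv}}x_F\le 2-p$; (b$_t$) $\sum_{F\in\mathcal F_{u\to}:LS_F\le t}x_F+\sum_{F\in\mathcal F_{\to v}:ES_F>t+\delta^{\max}_{uv}}x_F\le 2-p$; (c$_t$) $\sum_{F\in\mathcal F_{\to v}:ES_F\ge t}x_F+\sum_{F\in\mathcal F_{u\to}:LS_F<t+\delta^{\min}_{vu}}x_F\le 1+p$; (d$_t$) $\sum_{F\in\mathcal F_{v\to}:LS_F\le t}x_F+\sum_{F\in\mathcal F_{\to u}:ES_F>t+\delta^{\max}_{vu}}x_F\le 1+p$. Suppose $x\ge 0$, $0\le p\le 1$, and $\sum_{F\in\mathcal F_{\to w}}x_F\le1$, $\sum_{F\in\mathcal F_{w\to}}x_F\le 1$ for $w\in\{u,v\}$. Then: if (a$_t$) holds for all $t\in E_u$, it holds for all $t\in[\alpha_u,\beta_u]$; if (b$_t$) holds for all $t\in L_u$, it holds for all $t\in[\alpha_u,\beta_u]$;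 if (c$_t$) holds for all $t\in E_v$, it holds for all $t\in[\alpha_v,\beta_v]$; and if (d$_t$) holds for all $t\in L_v$, it holds for all $t\in[\alpha_v,\beta_v]$.
   Context: Instance data: tasks $V$, depot $0$, travel times $t_{uv}$, durations $d_v$, demands $q_v$, time windows $[\alpha_v,\beta_v]$, capacity $Q$; $D$ a set of unordered pairs of distinct tasks with parameters $\delta^{\min}_{uv},\delta^{\max}_{uv},\delta^{\min}_{vu},\delta^{\max}_{vu}\ge0$, $V_D$ the set of tasks in some pair of $D$. A fragment is a sequence $F=(v_1,\dots,v_\ell)$, $\ell\ge 2$, with $v_1,v_\ell\in V_D\cup\{0\}$, $v_2,\dots,v_{\ell-1}\in V\setminus V_D$, each task other than the depot occurring at most once, $\sum_{i=1}^{\ell-1}q_{v_i}\le Q$, and admitting a schedule. A schedule of $F$ is $(b_1,\dots,b_\ell)$ with $b_i\in[\alpha_{v_i},\beta_{v_i}]$, $b_i+d_{v_i}+t_{v_iv_{i+1}}\le b_{i+1}$ for $i<\ell$, and $\delta^{\min}_{v_1v_\ell}\le b_\ell-b_1\le\delta^{\max}_{v_1v_\ell}$ if $\{v_1,v_\ell\}\in D$. $LS_F=\max b_1$ and $ES_F=\min b_\ell$ over all schedules of $F$. For a set of fragments $\mathcal F$ and $w\in V_D$: $\mathcal F_{\to w}$ is the set of fragments in $\mathcal F$ ending at $w$ and $\mathcal F_{w\to}$ the set of those starting at $w$. *)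

From HB Require Import structures.
From mathcomp Require Import all_boot all_order all_algebra.
From mathcomp Require Import boolp classical_sets reals.
Set Implicit Arguments. Unset Strict Implicit. Unset Printing Implicit Defensive.
Import Order.TTheory GRing.Theory Num.Theory.
Local Open Scope ring_scope.

(* Nodes are 'I_n.+1; node ord0 is the depot 0, the other nodes are the tasks V. *)
Record instance (R : realType) (n : nat) := Instance {
  tt    : 'I_n.+1 -> 'I_n.+1 -> R;
  dur   : 'I_n.+1 -> R;
  dem   : 'I_n.+1 -> R;
  alpha : 'I_n.+1 -> R;
  beta  : 'I_n.+1 -> R;
  cap   : R;
  Drel  : rel 'I_n.+1;               (* {u,v} \in D  <->  Drel u v *)
  dmin  : 'I_n.+1 -> 'I_n.+1 -> R;
  dmax  : 'I_n.+1 -> 'I_n.+1 -> R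
}.

Section Defs.
Variables (R : realType) (n : nat) (I : instance R n).

Definition depot : 'I_n.+1 := ord0.
Definition is_task (w : 'I_n.+1) : bool := w != depot.

Definition wf_instance : Prop :=
  (forall u v, Drel I u v = Drel I v u) /\
  (forall u v, Drel I u v -> [/\ is_task u, is_task v & u != v]) /\
  (forall u v, Drel I u v -> 0 <= dmin I u v /\ 0 <= dmax I u v).

Definition in_VD (w : 'I_n.+1) : bool := [exists z, Drel I w z].

Definition fnode (F : seq 'I_n.+1) (i : nat) : 'I_n.+1 := nth depot F i.
Definition fst_node (F : seq 'I_n.+1) := fnode F 0.
Definition lst_node (F : seq 'I_n.+1) := fnode F (size F).-1.

(* b = (b_1,...,b_l) is encoded as b : nat -> R with indices 0..l-1 *)
Definition is_schedule (F : seq 'I_n.+1) (b : nat -> R) : Prop :=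
  (forall i, (i < size F)%N -> alpha I (fnode F i) <= b i <= beta I (fnode F i)) /\
  (forall i, (i.+1 < size F)%N ->
      b i + dur I (fnode F i) + tt I (fnode F i) (fnode F i.+1) <= b i.+1) /\
  (Drel I (fst_node F) (lst_node F) ->
      dmin I (fst_node F) (lst_node F) <= b (size F).-1 - b 0
      <= dmax I (fst_node F) (lst_node F)).

Definition is_fragment (F : seq 'I_n.+1) : Prop :=
  [/\ (2 <= size F)%N,
      in_VD (fst_node F) || (fst_node F == depot),
      in_VD (lst_node F) || (lst_node F == depot),
      (forall i, (0 < i)%N -> (i < (size F).-1)%N ->
          is_task (fnode F i) && ~~ in_VD (fnode F i)) &
    [/\ (forall w, is_task w -> (count_mem w F <= 1)%N),
      \sum_(0 <= i < (size F).-1) dem I (fnode F i) <= cap I &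
      exists b, is_schedule F b]].

Definition LS (F : seq 'I_n.+1) : R := sup [set b 0%N | b in is_schedule F].
Definition ES (F : seq 'I_n.+1) : R :=
  inf [set b (size F).-1 | b in is_schedule F].

End Defs.

From HB Require Import structures.
From mathcomp Require Import all_boot all_order all_algebra.
From mathcomp Require Import boolp classical_sets reals.
From mathcomp Require Import lra.
Import Order.TTheory GRing.Theory Num.Theory.
Local Open Scope ring_scope.

(* In each inequality the first sum, seen as a function of t, is a step
   function that only changes at the breakpoints g F (ES or LS of the fragments
   concerned) and is constant between them on the side that includes the
   breakpoint, while the second sum is monotone in the opposite direction.
   Hence the left-hand side at any t is dominated by its value at the nearest
   breakpoint on the appropriate side of t; if there is no such breakpoint the
   first sum vanishes and the second is bounded by the flow bound at v (resp.
   u), which is at most 1 <= 2 - p and 1 <= 1 + p.  The argument works for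
   every real t. *)

Lemma has_argmin_seq {d} {X : orderType d} {T : eqType} {s : seq T} {P : pred T}
    (f : T -> X) :
  has P s -> exists2 j, j \in s & P j /\ forall i, i \in s -> P i -> (f j <= f i)%O.
Proof.
elim: s => //= k s IHs.
have [/IHs [j sj [Pj j_min]] _|noPs /orP [Pk|//]] := boolP (has P s); last first.
  exists k; rewrite ?mem_head //; split=> // i; rewrite inE => /predU1P [-> //|si Pi].
  by case/negP: noPs; apply/hasP; exists i.
have [/andP [Pk fkj]|k_not_min] := boolP (P k && (f k <= f j)%O).
  exists k; rewrite ?mem_head //; split=> // i; rewrite inE => /predU1P [-> //|si Pi].
  exact: le_trans fkj (j_min i si Pi).
exists j; first by rewrite inE sj orbT.
split=> // i; rewrite inE => /predU1P [->{i} Pk|]; last exact: j_min.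
by move: k_not_min; rewrite Pk /= -ltNge => /ltW.
Qed.

Section ThresholdSums.
Context {R : realDomainType} {T : eqType} {s : seq T} {x : T -> R}.
Hypothesis x_ge0 : forall i, i \in s -> 0 <= x i.

Lemma ler_sum_subpred (A B : pred T) :
  (forall i, i \in s -> A i -> B i) ->
  \sum_(i <- s | A i) x i <= \sum_(i <- s | B i) x i.
Proof.
move=> AB; rewrite big_mkcond [leRHS]big_mkcond big_seq [leRHS]big_seq.
apply: ler_sum => i si; case: ifP => [/(AB i si)->//|_].
by case: ifP => // _; exact: x_ge0.
Qed.

Lemma threshold_sums_le_ge {P Q : pred T} {g h : T -> R} {c M : R} :
  \sum_(i <- s | Q i) x i <= M ->
  (forall j, j \in s -> P j ->
     \sum_(i <- s | P i && (g j <= g i)) x i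
       + \sum_(i <- s | Q i && (h i < g j + c)) x i <= M) ->
  forall t, \sum_(i <- s | P i && (t <= g i)) x i
              + \sum_(i <- s | Q i && (h i < t + c)) x i <= M.
Proof.
move=> sumQ_le at_breakpoints t.
have [active|inactive] := boolP (has (fun i => P i && (t <= g i)) s).
  have [j sj [/andP [Pj tj] j_min]] := has_argmin_seq g active.
  apply: le_trans (at_breakpoints j sj Pj); apply: lerD; apply: ler_sum_subpred.
    by move=> i si /andP [Pi ti]; rewrite Pi j_min ?Pi.
  by move=> i si /andP [-> hi]; apply: lt_le_trans hi _; rewrite lerD2r.
have -> : \sum_(i <- s | P i && (t <= g i)) x i = 0.
  rewrite big_seq_cond big_pred0 // => i; apply/negbTE; apply: contraNN inactive.
  by move=> /andP [si act]; apply/hasP; exists i.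
by rewrite add0r; apply: le_trans sumQ_le; apply: ler_sum_subpred => i _ /andP [].
Qed.

Lemma threshold_sums_le_le {P Q : pred T} {g h : T -> R} {c M : R} :
  \sum_(i <- s | Q i) x i <= M ->
  (forall j, j \in s -> P j ->
     \sum_(i <- s | P i && (g i <= g j)) x i
       + \sum_(i <- s | Q i && (g j + c < h i)) x i <= M) ->
  forall t, \sum_(i <- s | P i && (g i <= t)) x i
              + \sum_(i <- s | Q i && (t + c < h i)) x i <= M.
Proof.
have reflect_sums a :
    \sum_(i <- s | P i && (g i <= a)) x i + \sum_(i <- s | Q i && (a + c < h i)) x i
  = \sum_(i <- s | P i && (- a <= - g i)) x i
      + \sum_(i <- s | Q i && (- h i < - a + - c)) x i.
  by congr (_ + _); apply: eq_bigl => i; rewrite ?lerN2 // -opprD ltrN2.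
move=> sumQ_le at_breakpoints t; rewrite reflect_sums.
apply: (@threshold_sums_le_ge _ _ (fun i => - g i) (fun i => - h i)) => // j sj Pj.
by rewrite -reflect_sums; exact: at_breakpoints.
Qed.

End ThresholdSums.

Theorem theorem2 (R : realType) (n : nat) (I : instance R n)
  (wfI : wf_instance I)
  (Fs : seq (seq 'I_n.+1)) (uniqFs : uniq Fs)
  (fragFs : forall F, F \in Fs -> is_fragment I F)
  (u v : 'I_n.+1) (Duv : Drel I u v) (ltuv : (u < v)%N)
  (x : seq 'I_n.+1 -> R) (p : R)
  (x_ge0 : forall F, F \in Fs -> 0 <= x F)
  (p_ge0 : 0 <= p) (p_le1 : p <= 1)
  (in_u : \sum_(F <- Fs | lst_node F == u) x F <= 1)
  (out_u : \sum_(F <- Fs | fst_node F == u) x F <= 1)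
  (in_v : \sum_(F <- Fs | lst_node F == v) x F <= 1)
  (out_v : \sum_(F <- Fs | fst_node F == v) x F <= 1) :
  let a t := \sum_(F <- Fs | (lst_node F == u) && (t <= ES I F)) x F
           + \sum_(F <- Fs | (fst_node F == v) && (LS I F < t + dmin I u v)) x F
           <= 2 - p in
  let b t := \sum_(F <- Fs | (fst_node F == u) && (LS I F <= t)) x F
           + \sum_(F <- Fs | (lst_node F == v) && (t + dmax I u v < ES I F)) x F
           <= 2 - p in
  let c t := \sum_(F <- Fs | (lst_node F == v) && (t <= ES I F)) x F
           + \sum_(F <- Fs | (fst_node F == u) && (LS I F < t + dmin I v u)) x F
           <= 1 + p in
  let d t := \sum_(F <- Fs | (fst_node F == v) && (LS I F <= t)) x F
           + \sum_(F <- Fs | (lst_node F == u) && (t + dmax I v u < ES I F)) x F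
           <= 1 + p in
  let E_u t := exists2 F, F \in Fs & (lst_node F == u) /\ t = ES I F in
  let L_u t := exists2 F, F \in Fs & (fst_node F == u) /\ t = LS I F in
  let E_v t := exists2 F, F \in Fs & (lst_node F == v) /\ t = ES I F in
  let L_v t := exists2 F, F \in Fs & (fst_node F == v) /\ t = LS I F in
  [/\ (forall t, E_u t -> a t) ->
        forall t, alpha I u <= t <= beta I u -> a t,
      (forall t, L_u t -> b t) ->
        forall t, alpha I u <= t <= beta I u -> b t,
      (forall t, E_v t -> c t) ->
        forall t, alpha I v <= t <= beta I v -> c t &
      (forall t, L_v t -> d t) ->
        forall t, alpha I v <= t <= beta I v -> d t].
Proof.
move=> /=.
have two_p : 1 <= 2 - p by lra.
have one_p : 1 <= 1 + p by lra.
by split=> at_breakpoints t _;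
  [ apply: (threshold_sums_le_ge x_ge0 (le_trans out_v two_p))
  | apply: (threshold_sums_le_le x_ge0 (le_trans in_v two_p))
  | apply: (threshold_sums_le_ge x_ge0 (le_trans out_u one_p))
  | apply: (threshold_sums_le_le x_ge0 (le_trans in_u one_p)) ]
  => F sF PF; apply: at_breakpoints; exists F.
Qed.
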